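(* Let $G$ be a unimodular amenable locally compact group with Haar measure $m$, let $(A_i)_{i\in\mathbb I}$ be a strong Følner net in $G$, and let $\nu$ be an upper translation bounded measure on $G$. Then for all $K,L\in\mathcal K$ the following limits exist and \[ \sup_{K,L\in \mathcal K}\lim_{i\in \mathbb I} \sup_{s\in G} \frac{\nu(L \delta^K A_is)}{m(A_i)} = \sup_{K,L\in \mathcal K}\lim_{i\in \mathbb I} \sup_{s\in G}\frac{\nu(L \partial_K A_is)}{m(A_i)} = \sup_{K,L\in \mathcal K}\lim_{i\in \mathbb I} \sup_{s\in G}\frac{\nu(L \partial^K A_is)}{m(A_i)} = 0 . \]
   Context: A measure is a positive Borel measure; $\nu$ is upper translation bounded if $\sup_{x\in G}\nu(Bx)<\infty$ for some compact symmetric unit neighborhood $B$. $\mathcal K$: nonempty compact subsets of $G$; $\mathcal K_p$: those of positive Haar measure. Nets are indexed by a directed partially ordered set $(\mathbb I,\prec)$. For $K,A\subseteq G$ with $A^c=G\setminus A$: $\delta^KA=KA\,\triangle\,A$; $\partial^KA=(KA\cap \overline{A^c})\cup (K^{-1} \overline{A^c}\cap A)$; $\partial_K A=K^{-1}A\cap K^{-1}A^c$. A strong Følner net is a net $(A_i)$ in $\mathcal K_p$ with $\lim_i m(\partial_KA_i)/m(A_i)=0$ for every $K\in\mathcal K$. $G$ is amenable if it admits a left-invariant mean on $L^\infty(G)$. *)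

From HB Require Import structures.
From mathcomp Require Import all_boot all_order all_algebra.
From mathcomp Require Import all_classical all_reals all_analysis.

Set Implicit Arguments.
Unset Strict Implicit.
Unset Printing Implicit Defensive.

Import Order.TTheory GRing.Theory Num.Theory.
Import numFieldNormedType.Exports.
Local Open Scope classical_set_scope.
Local Open Scope ring_scope.

Definition lc_group (G : topologicalType) (mul : G -> G -> G) (inv : G -> G)
    (e : G) : Prop :=
  [/\ (forall x y z, mul x (mul y z) = mul (mul x y) z),
      (forall x, mul e x = x /\ mul x e = x),
      (forall x, mul (inv x) x = e /\ mul x (inv x) = e),
      (continuous (fun p : G * G => mul (fst p) (snd p)) /\ continuous inv) &
      (hausdorff_space G /\
      locally_compact [set: G])].

Section Sets.
Context {G : Type} (mul : G -> G -> G) (inv : G -> G).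

Definition setmul (A B : set G) : set G :=
  [set z | exists a, exists b, [/\ A a, B b & z = mul a b]].
Definition lmul (s : G) (A : set G) : set G := [set mul s a | a in A].
Definition rmul (A : set G) (s : G) : set G := [set mul a s | a in A].
Definition setinv (A : set G) : set G := [set inv a | a in A].
End Sets.

Definition ncompact {G : topologicalType} (K : set G) := compact K /\ K !=set0.

Definition borel (G : topologicalType) : set (set G) := <<s [set: G], open >>.

(* positive Borel measure: a set function, meaningful on Borel sets *)
Definition borel_measure {R : realType} {G : topologicalType}
    (mu : set G -> \bar R) : Prop :=
  [/\ mu set0 = 0%E,
      (forall B, @borel G B -> (0 <= mu B)%E) &
      (forall F : nat -> set G, (forall n, @borel G (F n)) ->
         trivIset setT F ->
         (fun n => \sum_(0 <= k < n) mu (F k))%E @ \oo --> mu (\bigcup_k F k))].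

(* outer measure induced by a Borel measure (used to evaluate mu on sets
   not known a priori to be Borel; coincides with mu on Borel sets) *)
Definition outer {R : realType} {G : topologicalType} (mu : set G -> \bar R)
    (X : set G) : \bar R :=
  ereal_inf [set mu B | B in [set B | @borel G B /\ X `<=` B]].

Definition haar_measure {R : realType} {G : topologicalType}
    (mul : G -> G -> G) (m : set G -> \bar R) : Prop :=
  [/\ borel_measure m /\ (forall g B, @borel G B -> m (lmul mul g B) = m B),
      (forall C, compact C -> (m C < +oo)%E),
      (forall U, open U -> U !=set0 -> (0 < m U)%E),
      (forall B, @borel G B ->
         m B = ereal_inf [set m U | U in [set U | open U /\ B `<=` U]]) &
      (forall U, open U ->
         m U = ereal_sup [set m C | C in [set C | compact C /\ C `<=` U]])].

Definition unimodular {R : realType} {G : topologicalType}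
    (mul : G -> G -> G) (m : set G -> \bar R) : Prop :=
  forall g B, @borel G B -> m (rmul mul B g) = m B.

Definition borel_fun {R : realType} {G : topologicalType} (f : G -> R) :=
  forall B : set R, measurable B -> @borel G (f @^-1` B).

Definition m_null {R : realType} {G : topologicalType} (m : set G -> \bar R)
    (N : set G) := @borel G N /\ m N = 0%E.

Definition Linf {R : realType} {G : topologicalType} (m : set G -> \bar R)
    (f : G -> R) : Prop :=
  borel_fun f /\
  exists C : R, exists N, m_null m N /\ forall x, ~ N x -> `|f x| <= C.

Definition left_invariant_mean {R : realType} {G : topologicalType}
    (mul : G -> G -> G) (m : set G -> \bar R) (M : (G -> R) -> R) : Prop :=
  [/\ (forall f g, Linf m f -> Linf m g -> M (f \+ g) = M f + M g),
      (forall (c : R) f, Linf m f -> M (fun x => c * f x) = c * M f),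
      (forall f, Linf m f ->
         (exists N, m_null m N /\ forall x, ~ N x -> 0 <= f x) -> 0 <= M f),
      M (fun _ => 1) = 1 &
      (forall g f, Linf m f -> M (fun x => f (mul g x)) = M f)].

Definition amenable {R : realType} {G : topologicalType}
    (mul : G -> G -> G) (m : set G -> \bar R) : Prop :=
  exists M : (G -> R) -> R, left_invariant_mean mul m M.

Definition upper_translation_bounded {R : realType} {G : topologicalType}
    (mul : G -> G -> G) (inv : G -> G) (e : G) (nu : set G -> \bar R) : Prop :=
  exists B : set G, [/\ compact B, setinv inv B = B, nbhs e B &
    (ereal_sup [set nu (rmul mul B x) | x in [set: G]] < +oo)%E].

Definition directed_poset {I : Type} (le : I -> I -> Prop) : Prop :=
  [/\ (forall i, le i i),
      (forall i j k, le i j -> le j k -> le i k),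
      (forall i j, le i j -> le j i -> i = j) &
      (forall i j, exists k, le i k /\ le j k)].

Definition net_cvg {I : Type} (le : I -> I -> Prop) {T : topologicalType}
    (x : I -> T) (l : T) : Prop :=
  forall U, nbhs l U -> exists i0, forall i, le i0 i -> U (x i).

Section Boundaries.
Context {G : topologicalType} (mul : G -> G -> G) (inv : G -> G).

Definition delta_up (K A : set G) : set G :=
  (setmul mul K A `\` A) `|` (A `\` setmul mul K A).

Definition bd_up (K A : set G) : set G :=
  (setmul mul K A `&` closure (~` A)) `|`
  (setmul mul (setinv inv K) (closure (~` A)) `&` A).

Definition bd_low (K A : set G) : set G :=
  setmul mul (setinv inv K) A `&` setmul mul (setinv inv K) (~` A).
End Boundaries.

Definition strong_folner {R : realType} {G : topologicalType} {I : Type}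
    (mul : G -> G -> G) (inv : G -> G) (m : set G -> \bar R)
    (le : I -> I -> Prop) (A : I -> set G) : Prop :=
  (forall i, ncompact (A i) /\ (0 < m (A i))%E) /\
  (forall K, ncompact K ->
     net_cvg le (fun i => fine (m (bd_low mul inv K (A i))) / fine (m (A i)))
       (0 : R)).

Definition sup_ratio {R : realType} {G : topologicalType}
    (mul : G -> G -> G) (nu m : set G -> \bar R) (L D A : set G) : \bar R :=
  ereal_sup [set (outer nu (rmul mul (setmul mul L D) s)
                   * ((fine (m A))^-1)%:E)%E | s in [set: G]].

Definition limits_exist_sup0 {R : realType} {G : topologicalType} {I : Type}
    (mul : G -> G -> G) (nu m : set G -> \bar R) (le : I -> I -> Prop)
    (A : I -> set G) (bd : set G -> set G -> set G) : Prop :=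
  (forall K L, ncompact K -> ncompact L ->
     exists l : \bar R,
       net_cvg le (fun i => sup_ratio mul nu m L (bd K (A i)) (A i)) l) /\
  ereal_sup [set l : \bar R | exists K, exists L,
     [/\ ncompact K, ncompact L &
       net_cvg le (fun i => sup_ratio mul nu m L (bd K (A i)) (A i)) l]]
  = 0%E.

(* Each of the three boundaries of A lies in M A ∩ M A^c = ∂_{M^-1} A, where
   M = (K ∪ {e} ∪ K^-1) B for a compact unit neighbourhood B on whose right
   translates ν is bounded by C.  Choose an open V ∋ e with V^-1 V ⊆ B.  If
   V X ⊆ Y, a maximal family of points x_j of X with pairwise disjoint V x_j
   has at most m(Y)/m(V) members (this is where unimodularity enters), and the
   B x_j cover X.  For X = L ∂ A s we may take Y = ∂_{N^-1} A s with N = B L M,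
   so ν(L ∂ A s) ≤ (C/m(V)) m(∂_{N^-1} A) uniformly in s.  Divided by m(A_i)
   this tends to 0 along a strong Følner net; the ratios being nonnegative,
   every limit is 0 and so is their supremum. *)

From HB Require Import structures.
From mathcomp Require Import all_boot all_order all_algebra.
From mathcomp Require Import all_classical all_reals all_analysis.
Import Order.TTheory GRing.Theory Num.Theory.
Local Open Scope classical_set_scope.
Local Open Scope ring_scope.
Set Implicit Arguments.
Unset Strict Implicit.
Unset Printing Implicit Defensive.

Section LocallyCompactGroup.
Variables (G : topologicalType) (mul : G -> G -> G) (inv : G -> G) (e : G).
Hypothesis HG : lc_group mul inv e.

Lemma lc_mulA x y z : mul x (mul y z) = mul (mul x y) z.
Proof. by case: HG. Qed.

Lemma lc_mul1g x : mul e x = x.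
Proof. by case: HG => _ H _ _ _; case: (H x). Qed.

Lemma lc_mulg1 x : mul x e = x.
Proof. by case: HG => _ H _ _ _; case: (H x). Qed.

Lemma lc_mulVg x : mul (inv x) x = e.
Proof. by case: HG => _ _ H _ _; case: (H x). Qed.

Lemma lc_mulgV x : mul x (inv x) = e.
Proof. by case: HG => _ _ H _ _; case: (H x). Qed.

Lemma lc_mulKg x y : mul (inv x) (mul x y) = y.
Proof. by rewrite lc_mulA lc_mulVg lc_mul1g. Qed.

Lemma lc_mulKVg x y : mul x (mul (inv x) y) = y.
Proof. by rewrite lc_mulA lc_mulgV lc_mul1g. Qed.

Lemma lc_mulgK x y : mul (mul y x) (inv x) = y.
Proof. by rewrite -lc_mulA lc_mulgV lc_mulg1. Qed.

Lemma lc_mulgKV x y : mul (mul y (inv x)) x = y.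
Proof. by rewrite -lc_mulA lc_mulVg lc_mulg1. Qed.

Lemma lc_invgK x : inv (inv x) = x.
Proof. by rewrite -[RHS](lc_mulKg (inv x)) lc_mulVg lc_mulg1. Qed.

Lemma lc_invg1 : inv e = e.
Proof. by rewrite -[LHS]lc_mul1g lc_mulgV. Qed.

Lemma lc_mul_continuous : continuous (fun p : G * G => mul p.1 p.2).
Proof. by case: HG => _ _ _ []. Qed.

Lemma lc_inv_continuous : continuous inv.
Proof. by case: HG => _ _ _ []. Qed.

Lemma lc_hausdorff : hausdorff_space G.
Proof. by case: HG => _ _ _ _ []. Qed.

Lemma continuous_mulr s : continuous (mul^~ s).
Proof.
move=> x; apply: (@continuous2_cvg _ _ _ _ _ _ (fun y => y) (fun _ => s) mul).
- exact: (@lc_mul_continuous (x, s)).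
- exact: cvg_id.
- exact: cvg_cst.
Qed.

Lemma continuous_mull s : continuous (mul s).
Proof.
move=> x; apply: (@continuous2_cvg _ _ _ _ _ _ (fun _ => s) (fun y => y) mul).
- exact: (@lc_mul_continuous (s, x)).
- exact: cvg_cst.
- exact: cvg_id.
Qed.

Lemma open_rmul U s : open U -> open (rmul mul U s).
Proof.
move=> oU; have -> : rmul mul U s = mul^~ (inv s) @^-1` U.
  apply/seteqP; split => [_ [u Uu <-]|y /= Uy]; first by rewrite /= lc_mulgK.
  by exists (mul y (inv s)); rewrite ?lc_mulgKV.
by apply: open_comp => // x _; exact: continuous_mulr.
Qed.

Lemma open_setmul M U : open U -> open (setmul mul M U).
Proof.
move=> oU; have -> : setmul mul M U = \bigcup_(k in M) (mul (inv k) @^-1` U).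
  apply/seteqP; split => [_ [k [u [Mk Uu ->]]]|y [k Mk /= Uy]].
    by exists k => //=; rewrite lc_mulKg.
  by exists k, (mul (inv k) y); rewrite lc_mulKVg.
by apply: bigcup_open => k _; apply: open_comp => // x _; exact: continuous_mull.
Qed.

Lemma compact_setmul P Q : compact P -> compact Q -> compact (setmul mul P Q).
Proof.
move=> cP cQ; have -> : setmul mul P Q = (fun p : G * G => mul p.1 p.2) @` (P `*` Q).
  apply/seteqP; split => [_ [a [b [Pa Qb ->]]]|_ [[a b] [/= Pa Qb] <-]].
    by exists (a, b).
  by exists a, b.
apply: continuous_compact; last exact: compact_setX.
exact: continuous_subspaceT lc_mul_continuous.
Qed.

Lemma compact_setinv K : compact K -> compact (setinv inv K).
Proof.
move=> cK; apply: continuous_compact => //.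
exact: continuous_subspaceT lc_inv_continuous.
Qed.

Lemma compact_rmul K s : compact K -> compact (rmul mul K s).
Proof.
move=> cK; apply: continuous_compact => //.
exact: continuous_subspaceT (@continuous_mulr s).
Qed.

Lemma setinvK K : setinv inv (setinv inv K) = K.
Proof.
apply/seteqP; split => [_ [_ [k Kk <-] <-]|k Kk]; first by rewrite lc_invgK.
by exists (inv k); [exists k | rewrite lc_invgK].
Qed.

Lemma closure_sub_setmul B X : nbhs e B -> closure X `<=` setmul mul B X.
Proof.
move=> nB y Xy.
have : mul y \o inv @ y --> mul y (inv y).
  exact: cvg_comp (@lc_inv_continuous y) (@continuous_mull y (inv y)).
rewrite lc_mulgV => /(_ _ nB) /Xy [z [Xz /= Byz]].
by exists (mul y (inv z)), z; rewrite lc_mulgKV.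
Qed.

Lemma exists_open_invmul_sub B : nbhs e B ->
  exists V, [/\ open V, V e & forall v w, V v -> V w -> B (mul (inv v) w)].
Proof.
move=> nB.
have : (fun p : G * G => mul p.1 p.2) @ (e, e) --> mul e e.
  exact: (@lc_mul_continuous (e, e)).
rewrite lc_mul1g; case/(_ _ nB) => -[U W] [/= nU nW] UWB.
have nU' : nbhs e (inv @^-1` U) by apply: lc_inv_continuous; rewrite lc_invg1.
exists (interior (inv @^-1` U `&` W)); split; first exact: open_interior.
  exact: filterI.
by move=> v w /interior_subset[Uv _] /interior_subset[_ Ww]; exact: (UWB (inv v, w)).
Qed.

End LocallyCompactGroup.

Section Borel.
Variable G : topologicalType.
Implicit Types A B C U : set G.

Let borel_sigma_algebra : sigma_algebra setT (@borel G).
Proof. exact: smallest_sigma_algebra. Qed.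

Lemma borel0 : @borel G set0.
Proof. by case: borel_sigma_algebra. Qed.

Lemma borelC A : borel A -> borel (~` A).
Proof. by case: borel_sigma_algebra => _ H _ /H; rewrite setTD. Qed.

Lemma open_borel U : open U -> borel U.
Proof. exact: sub_sigma_algebra. Qed.

Lemma closed_borel C : closed C -> borel C.
Proof.
by move=> cC; rewrite -(setCK C); apply: borelC; apply: open_borel; exact: closed_openC.
Qed.

Lemma compact_borel C : hausdorff_space G -> compact C -> borel C.
Proof. by move=> hG cC; apply: closed_borel; exact: compact_closed. Qed.

Lemma borelU A B : borel A -> borel B -> borel (A `|` B).
Proof.
move=> bA bB; case: borel_sigma_algebra => _ _ H; rewrite -bigcup2E; apply: H.
by case=> [|[|n]] //=; exact: borel0.
Qed.

Lemma borelI A B : borel A -> borel B -> borel (A `&` B).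
Proof.
move=> bA bB; rewrite -(setCK (A `&` B)) setCI.
by apply: borelC; apply: borelU; exact: borelC.
Qed.

Lemma borelD A B : borel A -> borel B -> borel (A `\` B).
Proof. by move=> bA bB; apply: borelI => //; exact: borelC. Qed.

Lemma borel_bigsetU (I : Type) (F : I -> set G) s :
  (forall i, borel (F i)) -> borel (\big[setU/set0]_(i <- s) F i).
Proof.
move=> bF; elim: s => [|i s IH]; first by rewrite big_nil; exact: borel0.
by rewrite big_cons; exact: borelU.
Qed.

End Borel.

Section BorelMeasure.
Variables (R : realType) (G : topologicalType) (mu : set G -> \bar R).
Hypothesis Hmu : borel_measure mu.
Implicit Types A B : set G.
Local Open Scope ereal_scope.

Lemma borel_measure0 : mu set0 = 0.
Proof. by case: Hmu. Qed.

Lemma borel_measure_ge0 A : borel A -> 0 <= mu A.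
Proof. by case: Hmu => _ H _; exact: H. Qed.

Lemma borel_measureU A B : borel A -> borel B -> A `&` B = set0 ->
  mu (A `|` B) = mu A + mu B.
Proof.
move=> bA bB AB0; case: Hmu => mu0 _ /(_ (bigcup2 A B)).
rewrite bigcup2E -trivIset_bigcup2 => /(_ _ AB0) cvgAB.
have bAB n : borel (bigcup2 A B n) by case: n => [|[|n]] //=; exact: borel0.
apply: (cvg_unique (@ereal_hausdorff R) (cvgAB bAB)).
apply: cvg_near_cst; exists 2%N => // n /= n2.
rewrite -(subnKC n2) big_nat_recl // big_nat_recl //=.
by rewrite big1 ?adde0 // => k _; exact: mu0.
Qed.

Lemma le_borel_measure A B : borel A -> borel B -> A `<=` B -> mu A <= mu B.
Proof.
move=> bA bB AB; rewrite -(setDUK AB) borel_measureU ?setDIK //; last exact: borelD.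
by rewrite leeDl // borel_measure_ge0 //; exact: borelD.
Qed.

Lemma borel_measureU2 A B : borel A -> borel B -> mu (A `|` B) <= mu A + mu B.
Proof.
move=> bA bB; have -> : A `|` B = A `|` (B `\` A) by rewrite setUDr setDv setD0.
rewrite borel_measureU ?setDIK //; last exact: borelD.
by rewrite leeD2l // le_borel_measure //; exact: borelD.
Qed.

Lemma borel_measure_bigsetU_le (I : Type) (F : I -> set G) s :
  (forall i, borel (F i)) ->
  mu (\big[setU/set0]_(i <- s) F i) <= \sum_(i <- s) mu (F i).
Proof.
move=> bF; elim: s => [|i s IH]; first by rewrite !big_nil borel_measure0.
rewrite !big_cons; apply: le_trans (borel_measureU2 (bF i) (borel_bigsetU s bF)) _.
exact: leeD2l.
Qed.

Lemma borel_measure_bigsetU (I : choiceType) (F : I -> set G) s :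
  (forall i, borel (F i)) -> uniq s -> trivIset [set` s] F ->
  mu (\big[setU/set0]_(i <- s) F i) = \sum_(i <- s) mu (F i).
Proof.
move=> bF; elim: s => [|i s IH]; first by rewrite !big_nil borel_measure0.
move=> /= /andP[i_s us] tF; rewrite !big_cons borel_measureU //.
- by rewrite IH //; apply: sub_trivIset tF => j /= js; rewrite inE js orbT.
- exact: borel_bigsetU.
rewrite -bigcup_seq setI_bigcupr; apply: bigcup0 => j /= js.
move/trivIsetP: tF; apply; rewrite /= ?inE ?eqxx ?js ?orbT //.
by apply: contraNneq i_s => ->.
Qed.

Lemma outer_ge0 X : 0 <= outer mu X.
Proof. by apply: le_ereal_inf_tmp => _ [B [bB _] <-]; exact: borel_measure_ge0. Qed.

Lemma outer_le X B : borel B -> X `<=` B -> outer mu X <= mu B.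
Proof. by move=> bB XB; apply: ereal_inf_lbound; exists B. Qed.

End BorelMeasure.

Definition bd_mul {G : Type} (mul : G -> G -> G) (M A : set G) : set G :=
  setmul mul M A `&` setmul mul M (~` A).

Section ProductBoundary.
Variables (G : topologicalType) (mul : G -> G -> G) (inv : G -> G) (e : G).
Hypothesis HG : lc_group mul inv e.
Implicit Types A M N : set G.

Lemma bd_low_setinv M : bd_low mul inv (setinv inv M) = bd_mul mul M.
Proof. by apply/funext => A; rewrite /bd_low (setinvK HG). Qed.

Lemma mul_bd_mul N M A n d :
  N n -> bd_mul mul M A d -> bd_mul mul (setmul mul N M) A (mul n d).
Proof.
move=> Nn [[m1 [a [Mm1 Aa ->]]] [m2 [b [Mm2 Ab dE]]]]; split.
  by exists (mul n m1), a; split => //; [exists n, m1 | rewrite (lc_mulA HG)].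
by exists (mul n m2), b; split => //; [exists n, m2 | rewrite dE (lc_mulA HG)].
Qed.

Lemma rmul_bd_mul M A s : rmul mul (bd_mul mul M A) s = bd_mul mul M (rmul mul A s).
Proof.
apply/seteqP; split.
- move=> _ [_ [[m1 [a [Mm1 Aa ->]]] [m2 [b [Mm2 Ab dE]]]] <-]; split.
    by exists m1, (mul a s); split => //; [exists a | rewrite (lc_mulA HG)].
  exists m2, (mul b s); split => //; last by rewrite dE (lc_mulA HG).
  move=> [a' Aa' /(congr1 (mul^~ (inv s)))]; rewrite !(lc_mulgK HG) => a'b.
  by apply: Ab; rewrite -a'b.
- move=> z [[m1 [_ [Mm1 [a Aa <-] ->]]] [m2 [c [Mm2 Ac zc]]]].
  exists (mul m1 a); last by rewrite (lc_mulA HG).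
  split; first by exists m1, a.
  exists m2, (mul c (inv s)); split => //.
    by move=> Acs; apply: Ac; exists (mul c (inv s)); rewrite ?(lc_mulgKV HG).
  by rewrite (lc_mulA HG) -zc -(lc_mulA HG) (lc_mulgK HG).
Qed.

Lemma borel_bd_mul M A : compact M -> compact A -> borel (bd_mul mul M A).
Proof.
move=> cM cA; apply: borelI.
  by apply: (compact_borel (lc_hausdorff HG)); exact: (compact_setmul HG).
apply: open_borel; apply: (open_setmul HG); apply: closed_openC.
exact: (compact_closed (lc_hausdorff HG)).
Qed.

Section Inclusions.
Variables (B K : set G).
Hypothesis nB : nbhs e B.

Let M0 := setmul mul (K `|` [set e] `|` setinv inv K) B.

Let inM0 k b : (K `|` [set e] `|` setinv inv K) k -> B b -> M0 (mul k b).
Proof. by move=> Kk Bb; exists k, b. Qed.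

Let Be : B e := nbhs_singleton nB.

Let inK k : K k -> M0 k.
Proof. by move=> Kk; rewrite -(lc_mulg1 HG k); apply: inM0 => //; left; left. Qed.

Let inKV k : K k -> M0 (inv k).
Proof.
by move=> Kk; rewrite -(lc_mulg1 HG (inv k)); apply: inM0 => //; right; exists k.
Qed.

Let inB b : B b -> M0 b.
Proof. by move=> Bb; rewrite -(lc_mul1g HG b); apply: inM0 => //; left; right. Qed.

Let in1 : M0 e := inB Be.

Let compact_M0 : compact B -> compact K -> compact M0.
Proof.
move=> cB cK; apply: (compact_setmul HG) => //.
apply: compactU; last exact: (compact_setinv HG).
by apply: compactU => //; exact: compact_set1.
Qed.

Lemma delta_up_sub_bd_mul A : K !=set0 -> delta_up mul K A `<=` bd_mul mul M0 A.
Proof.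
case=> k0 Kk0 x [[[k [a [Kk Aa ->]]] nA]|[Ax nKA]]; split.
- by exists k, a; split => //; exact: inK.
- by exists e, (mul k a); split => //; rewrite (lc_mul1g HG).
- by exists e, x; split => //; rewrite (lc_mul1g HG).
- exists k0, (mul (inv k0) x); split; [exact: inK | | by rewrite (lc_mulKVg HG)].
  by move=> Ax'; apply: nKA; exists k0, (mul (inv k0) x); rewrite (lc_mulKVg HG).
Qed.

Lemma bd_low_sub_bd_mul A : bd_low mul inv K A `<=` bd_mul mul M0 A.
Proof.
move=> x [[_ [a [[k Kk <-] Aa ->]]] [_ [b [[k' Kk' <-] Ab xE]]]]; split.
  by exists (inv k), a; split => //; exact: inKV.
by exists (inv k'), b; split => //; exact: inKV.
Qed.

Lemma bd_up_sub_bd_mul A : bd_up mul inv K A `<=` bd_mul mul M0 A.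
Proof.
have clA : closure (~` A) `<=` setmul mul B (~` A) := closure_sub_setmul HG nB.
move=> x [[[k [a [Kk Aa xE]]] /clA [b [z [Bb nAz xE']]]]|].
  split; first by exists k, a; split => //; exact: inK.
  by exists b, z; split => //; exact: inB.
move=> [[_ [y [[k Kk <-] /clA [b [z [Bb nAz ->]]] ->]]] Ax]; split.
  by exists e, (mul (inv k) (mul b z)); split => //; rewrite (lc_mul1g HG).
exists (mul (inv k) b), z; split => //; last by rewrite (lc_mulA HG).
by apply: inM0 => //; right; exists k.
Qed.

Lemma boundaries_sub_bd_mul : compact B -> ncompact K ->
  exists2 M, ncompact M & forall A, [/\ delta_up mul K A `<=` bd_mul mul M A,
    bd_low mul inv K A `<=` bd_mul mul M A & bd_up mul inv K A `<=` bd_mul mul M A].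
Proof.
move=> cB [cK K0]; exists M0; first by split; [exact: compact_M0 | exists e].
move=> A; split; first exact: delta_up_sub_bd_mul.
  exact: bd_low_sub_bd_mul.
exact: bd_up_sub_bd_mul.
Qed.

End Inclusions.
End ProductBoundary.

Section Nets.
Variables (I : Type) (le : I -> I -> Prop).

Lemma net_cvg_unique (T : topologicalType) (f : I -> T) l1 l2 :
  hausdorff_space T -> directed_poset le ->
  net_cvg le f l1 -> net_cvg le f l2 -> l1 = l2.
Proof.
move=> hT [_ _ _ dir] f_l1 f_l2; apply: hT => U W /f_l1 [i Ui] /f_l2 [j Wj].
by have [k [ik jk]] := dir i j; exists (f k); split; [exact: Ui | exact: Wj].
Qed.

Lemma net_cvg_squeeze0 (R : realType) (r : I -> R) (f : I -> \bar R) (c : R) :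
  0 <= c -> net_cvg (T := R^o) le r 0 ->
  (forall i, (0 <= f i <= (c * r i)%:E)%E) -> net_cvg le f 0%E.
Proof.
move=> c0 r0 f_bd U U0; have /nbhs_ballP[eps eps0 epsU] : ereal_nbhs 0%E U := U0.
have d0 : 0 < eps / (c + 1) by rewrite divr_gt0 // ltr_wpDl.
have [i0 hi0] := r0 _ (nbhsx_ballx (0 : R^o) _ d0).
exists i0 => i /hi0; rewrite -ball_normE /= sub0r normrN => ri_small.
have /andP[fi0 fic] := f_bd i.
have fi_fin : f i \is a fin_num by rewrite ge0_fin_numE // (le_lt_trans fic) ?ltry.
rewrite -(fineK fi_fin); apply: epsU; rewrite /ball_ /= sub0r normrN ger0_norm ?fine_ge0 //.
rewrite -lte_fin (fineK fi_fin) (le_lt_trans fic) // lte_fin.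
rewrite (le_lt_trans (ler_wpM2l c0 (ler_norm (r i)))) //.
rewrite (le_lt_trans (ler_wpM2l c0 (ltW ri_small))) //.
by rewrite mulrA ltr_pdivrMr ?ltr_wpDl // mulrDr mulr1 mulrC ltrDl.
Qed.

End Nets.

Lemma sumEFin_cst (R : numDomainType) (T : Type) (s : seq T) (c : R) :
  (\sum_(x <- s) c%:E)%E = ((size s)%:R * c)%:E.
Proof. by rewrite sumEFin big_const_seq count_predT iter_addr_0 mulr_natl. Qed.

Lemma upper_translation_boundedP (R : realType) (G : topologicalType)
    (mul : G -> G -> G) (inv : G -> G) (e : G) (nu : set G -> \bar R) :
  lc_group mul inv e -> borel_measure nu -> upper_translation_bounded mul inv e nu ->
  exists B, exists2 C : R, [/\ compact B, nbhs e B & 0 <= C] &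
    forall x, (nu (rmul mul B x) <= C%:E)%E.
Proof.
move=> HG Hnu [B [cB _ nB]]; set S := [set _ | _ in _] => S_fin.
have bB x : borel (rmul mul B x).
  by apply: (compact_borel (lc_hausdorff HG)); exact: (compact_rmul HG).
have S_ge0 : (0 <= ereal_sup S)%E.
  by apply: le_trans (borel_measure_ge0 Hnu (bB e)) _; apply: ereal_sup_ubound; exists e.
have S_fin_num : ereal_sup S \is a fin_num by rewrite ge0_fin_numE.
exists B, (fine (ereal_sup S)); first by split => //; exact: fine_ge0.
by move=> x; rewrite fineK //; apply: ereal_sup_ubound; exists x.
Qed.

Definition packing {G : choiceType} (mul : G -> G -> G) (V X : set G) (s : seq G) :=
  [/\ uniq s, [set` s] `<=` X & trivIset [set` s] (rmul mul V)].

Section Packing.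
Variables (R : realType) (G : topologicalType) (mul : G -> G -> G) (inv : G -> G) (e : G).
Variable m : set G -> \bar R.
Hypotheses (HG : lc_group mul inv e) (Hm : borel_measure m) (Hu : unimodular mul m).
Variables (B V : set G).
Hypotheses (oV : open V) (Ve : V e) (VVB : forall v w, V v -> V w -> B (mul (inv v) w)).
Hypothesis mV_fin : m V \is a fin_num.

Lemma packing_size_le X Y s : borel Y -> (forall x v, X x -> V v -> Y (mul v x)) ->
  packing mul V X s -> (((size s)%:R * fine (m V))%:E <= m Y)%E.
Proof.
move=> bY XY [us sX tV].
have bVx x : borel (rmul mul V x) by apply: open_borel; exact: (open_rmul HG).
have mVx x : m (rmul mul V x) = (fine (m V))%:E by rewrite Hu ?fineK //; exact: open_borel.
apply: le_trans (le_borel_measure Hm (borel_bigsetU s bVx) bY _).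
  by rewrite borel_measure_bigsetU // (eq_bigr _ (fun x _ => mVx x)) sumEFin_cst.
by move=> y; rewrite -bigcup_seq => -[x /sX Xx [v Vv <-]]; exact: XY.
Qed.

Lemma packing_cons X s x : packing mul V X s -> X x ->
  ~ (\big[setU/set0]_(y <- s) rmul mul B y) x -> packing mul V X (x :: s).
Proof.
move=> [us sX tV] Xx; rewrite -bigcup_seq => xnB.
have sep y : y \in s -> ~ (rmul mul V x `&` rmul mul V y !=set0).
  move=> ys [_ [[v Vv <-] [w Vw wy]]]; apply: xnB; exists y => //.
  by exists (mul (inv v) w); [exact: VVB | rewrite -(lc_mulA HG) wy (lc_mulKg HG)].
split.
- rewrite /= us andbT; apply/negP => xs; apply: (sep x xs).
  by exists x; split; exists e; rewrite ?(lc_mul1g HG).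
- by move=> y /=; rewrite inE => /orP[/eqP ->|/sX].
- move=> y z /=; rewrite !inE => /orP[/eqP->|ys] /orP[/eqP->|zs] //.
  + by move/(sep z zs).
  + by rewrite setIC => /(sep y ys).
  + exact: tV.
Qed.

Lemma exists_packing_cover X Y : borel Y -> m Y \is a fin_num -> 0 < fine (m V) ->
  (forall x v, X x -> V v -> Y (mul v x)) ->
  exists s, X `<=` \big[setU/set0]_(x <- s) rmul mul B x /\
    (size s)%:R * fine (m V) <= fine (m Y).
Proof.
move=> bY mY_fin mV0 XY.
have size_le s : packing mul V X s -> (size s)%:R * fine (m V) <= fine (m Y).
  by move=> /(packing_size_le bY XY); rewrite -lee_fin fineK.
pose P n := `[< exists s, size s = n /\ packing mul V X s >].
have P0 : exists n, P n by exists 0%N; apply/asboolP; exists [::].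
have P_le n : P n -> (n <= Num.Def.archi_bound (fine (m Y) / fine (m V)))%N.
  case/asboolP => s [<- /size_le]; rewrite -ler_pdivlMr // => size_s.
  have mY0 : 0 <= fine (m Y) by rewrite fine_ge0 // borel_measure_ge0.
  have := le_lt_trans size_s (archi_boundP (divr_ge0 mY0 (ltW mV0))).
  by rewrite ltr_nat => /ltnW.
case: (ex_maxnP P0 P_le) => n /asboolP[s [sz ps]] s_max.
exists s; split; last exact: size_le.
move=> x Xx; apply: contrapT => xnB.
have : P (size s).+1 by apply/asboolP; exists (x :: s); split => //; exact: packing_cons.
by move/s_max; rewrite sz ltnn.
Qed.

End Packing.

Section Estimates.
Variables (R : realType) (G : topologicalType) (mul : G -> G -> G) (inv : G -> G) (e : G).
Variables (m nu : set G -> \bar R).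
Hypotheses (HG : lc_group mul inv e) (Hm : haar_measure mul m) (Hu : unimodular mul m).
Hypothesis Hnu : borel_measure nu.
Variables (B V : set G) (C : R).
Hypotheses (cB : compact B) (C0 : 0 <= C) (nuB : forall x, (nu (rmul mul B x) <= C%:E)%E).
Hypotheses (oV : open V) (Ve : V e) (VVB : forall v w, V v -> V w -> B (mul (inv v) w)).

Let hG : hausdorff_space G := lc_hausdorff HG.

Let Hmb : borel_measure m.
Proof. by case: Hm => -[]. Qed.

Let haar_sub_compact_fin X Y : borel X -> compact Y -> X `<=` Y -> m X \is a fin_num.
Proof.
case: Hm => _ mC _ _ _ bX cY XY; rewrite ge0_fin_numE ?borel_measure_ge0 //.
exact: le_lt_trans (le_borel_measure Hmb bX (compact_borel hG cY) XY) (mC _ cY).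
Qed.

Let VB : V `<=` B.
Proof. by move=> v Vv; have := VVB Ve Vv; rewrite (lc_invg1 HG) (lc_mul1g HG). Qed.

Let mV_fin : m V \is a fin_num.
Proof. exact: haar_sub_compact_fin (open_borel oV) cB VB. Qed.

Let mV_gt0 : 0 < fine (m V).
Proof.
case: Hm => _ _ mU _ _; have := mU _ oV (ex_intro _ e Ve).
by rewrite -(fineK mV_fin) lte_fin.
Qed.

Lemma outer_rmul_le L M A D s : compact L -> compact M -> compact A ->
  D `<=` bd_mul mul M A ->
  (outer nu (rmul mul (setmul mul L D) s) <=
    (C / fine (m V) * fine (m (bd_mul mul (setmul mul (setmul mul B L) M) A)))%:E)%E.
Proof.
move=> cL cM cA DM; set N := setmul mul (setmul mul B L) M.
have cN : compact N by do 2![apply: (compact_setmul HG) => //].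
have bN A' : compact A' -> borel (bd_mul mul N A').
  by move=> cA'; exact: (borel_bd_mul HG cN cA').
have NA_fin : m (bd_mul mul N A) \is a fin_num.
  apply: haar_sub_compact_fin (bN _ cA) (compact_setmul HG cN cA) _; exact: subIsetl.
set Y := rmul mul (bd_mul mul N A) s.
have bY : borel Y by rewrite /Y (rmul_bd_mul HG); apply: bN; exact: (compact_rmul HG).
have mY : m Y = m (bd_mul mul N A) by rewrite Hu //; exact: bN.
have XY x v : rmul mul (setmul mul L D) s x -> V v -> Y (mul v x).
  move=> [_ [l [d [Ll Dd ->]]] <-] Vv; exists (mul (mul v l) d).
    by apply: (mul_bd_mul HG _ (DM _ Dd)); exists v, l; split => //; exact: VB.
  by rewrite !(lc_mulA HG).
have mY_fin : m Y \is a fin_num by rewrite mY.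
have [xs [cover size_le]] :=
  exists_packing_cover HG Hmb Hu oV Ve VVB mV_fin bY mY_fin mV_gt0 XY.
have bBx x : borel (rmul mul B x) by apply: (compact_borel hG); exact: (compact_rmul HG).
apply: le_trans (outer_le nu (borel_bigsetU xs bBx) cover) _.
apply: le_trans (borel_measure_bigsetU_le Hnu xs bBx) _.
apply: le_trans (lee_sum _ (fun x _ => nuB x)) _.
rewrite sumEFin_cst lee_fin mulrC -mulrA ler_wpM2l // mulrC ler_pdivlMr //.
by rewrite -mY.
Qed.

Lemma sup_ratio_ge0 L D A : (0 < m A)%E -> (0 <= sup_ratio mul nu m L D A)%E.
Proof.
move=> mA0.
apply: (@le_trans _ _ (outer nu (rmul mul (setmul mul L D) e) * ((fine (m A))^-1)%:E)%E).
  by apply: mule_ge0; [exact: outer_ge0 | rewrite lee_fin invr_ge0 fine_ge0 // ltW].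
by apply: ereal_sup_ubound; exists e.
Qed.

Lemma sup_ratio_le L M A D : compact L -> compact M -> compact A -> (0 < m A)%E ->
  D `<=` bd_mul mul M A ->
  (sup_ratio mul nu m L D A <=
    (C / fine (m V) *
     (fine (m (bd_mul mul (setmul mul (setmul mul B L) M) A)) / fine (m A)))%:E)%E.
Proof.
move=> cL cM cA mA0 DM; apply: ge_ereal_sup => _ [s _ <-].
rewrite mulrA EFinM lee_wpmul2r ?lee_fin ?invr_ge0 ?fine_ge0 ?(ltW mA0) //.
exact: outer_rmul_le.
Qed.

Variables (I : Type) (le : I -> I -> Prop) (A : I -> set G).
Hypotheses (Hdir : directed_poset le) (Hfol : strong_folner mul inv m le A).

Lemma net_cvg_sup_ratio0 L M (bd : set G -> set G) : ncompact L -> ncompact M ->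
  (forall A0, bd A0 `<=` bd_mul mul M A0) ->
  net_cvg le (fun i => sup_ratio mul nu m L (bd (A i)) (A i)) 0%E.
Proof.
move=> [cL [l Ll]] [cM [x Mx]] bdM; set N := setmul mul (setmul mul B L) M.
have ncN : ncompact (setinv inv N).
  split; first by apply: (compact_setinv HG); do 2![apply: (compact_setmul HG) => //].
  have Nelx : N (mul (mul e l) x).
    by exists (mul e l), x; split => //; exists e, l; split => //; exact: VB.
  by exists (inv (mul (mul e l) x)), (mul (mul e l) x).
case: Hfol => A_pos /(_ _ ncN); rewrite (bd_low_setinv HG) => bdN_cvg.
apply: net_cvg_squeeze0 (divr_ge0 C0 (ltW mV_gt0)) bdN_cvg _ => i.
have [[cA _] mA0] := A_pos i.
by rewrite sup_ratio_ge0 //=; exact: sup_ratio_le.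
Qed.

Lemma limits_exist_sup0_of_sub (bd : set G -> set G -> set G) :
  (forall K, ncompact K ->
     exists2 M, ncompact M & forall A0, bd K A0 `<=` bd_mul mul M A0) ->
  limits_exist_sup0 mul nu m le A bd.
Proof.
move=> bd_sub; have lim0 K L : ncompact K -> ncompact L ->
    net_cvg le (fun i => sup_ratio mul nu m L (bd K (A i)) (A i)) 0%E.
  by move=> /bd_sub[M nM bdM] nL; exact: net_cvg_sup_ratio0 nL nM bdM.
split=> [K L nK nL|]; first by exists 0%E; exact: lim0.
rewrite -[RHS](ereal_sup1 0%E); congr ereal_sup.
apply/seteqP; split=> [l [K [L [nK nL Kl]]]|_ ->].
  exact: net_cvg_unique (@ereal_hausdorff R) Hdir Kl (lim0 _ _ nK nL).
have n1 : ncompact [set e] by split; [exact: compact_set1 | exists e].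
by exists [set e], [set e]; split => //; exact: lim0.
Qed.

End Estimates.

Theorem lemma5p10 (R : realType) (G : topologicalType)
    (mul : G -> G -> G) (inv : G -> G) (e : G)
    (m : set G -> \bar R) (I : Type) (le : I -> I -> Prop)
    (A : I -> set G) (nu : set G -> \bar R) :
  lc_group mul inv e ->
  haar_measure mul m ->
  unimodular mul m ->
  amenable mul m ->
  directed_poset le ->
  strong_folner mul inv m le A ->
  borel_measure nu ->
  upper_translation_bounded mul inv e nu ->
  [/\ limits_exist_sup0 mul nu m le A (delta_up mul),
      limits_exist_sup0 mul nu m le A (bd_low mul inv) &
      limits_exist_sup0 mul nu m le A (bd_up mul inv)].
Proof.
move=> HG Hm Hu _ Hdir Hfol Hnu /(upper_translation_boundedP HG Hnu)[B [C [cB nB C0] nuB]].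
have [V [oV Ve VVB]] := exists_open_invmul_sub HG nB.
have lim := limits_exist_sup0_of_sub HG Hm Hu Hnu cB C0 nuB oV Ve VVB Hdir Hfol.
have bdM K : ncompact K -> exists2 M, ncompact M & forall A0,
    [/\ delta_up mul K A0 `<=` bd_mul mul M A0, bd_low mul inv K A0 `<=` bd_mul mul M A0
       & bd_up mul inv K A0 `<=` bd_mul mul M A0].
  by move=> nK; exact: (boundaries_sub_bd_mul HG nB cB nK).
by split; apply: lim => K /bdM[M nM sub]; exists M => // A0; case: (sub A0).
Qed.
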